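(* For any $U\in(0,1]$, if $f(U)\le\frac{25C}{(\lambda^* )^2}+\frac{g(\lambda^* )}{\epsilon^2}$, then with $L=\sqrt{\frac{C}{C/U^2+(g(U)-1)/\epsilon^2}}$ we have $f(\lambda)\le50f(\lambda^* )$ for every $\lambda\in[L,U]$.
   Context: $\epsilon\in(0,1)$, $K\ge1$, $C>K$, $g:[0,1]\to[1,K]$ non-decreasing, $f(\lambda)=\frac{C}{\lambda^2}+\frac{g(\lambda)}{\epsilon^2}$, and $\lambda^*\in(0,1]$ a minimizer of $f$ over $[0,1]$. *)

From Stdlib Require Import Reals Lra.
Open Scope R_scope.

Definition fobj (C eps : R) (g : R -> R) (lam : R) : R :=
  C / lam ^ 2 + g lam / eps ^ 2.

(* On [L, U] the barrier term C/λ^2 is at most C/L^2 = C/U^2 + (g(U) - 1)/ε^2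
   and the penalty term is at most g(U)/ε^2 by monotonicity of g, so f(λ) ≤ 2 f(U).
   The hypothesis on f(U) says f(U) ≤ 25 f(λ⋆), whence f(λ) ≤ 50 f(λ⋆). *)
From Stdlib Require Import Reals Lra.
Open Scope R_scope.

Lemma div_sqr_le_of_sqrt_div_le (C D lam : R) :
  0 < C -> 0 < D -> sqrt (C / D) <= lam -> C / lam ^ 2 <= D.
Proof.
  intros HC HD Hlam.
  assert (HCD : 0 < C / D) by (apply Rdiv_lt_0_compat; assumption).
  assert (Hsqrt : 0 < sqrt (C / D)) by (apply sqrt_lt_R0; exact HCD).
  assert (Hsq : C / D <= lam ^ 2).
  { rewrite <- (sqrt_sqrt (C / D)) by lra.
    replace (lam ^ 2) with (lam * lam) by ring.
    apply Rmult_le_compat; lra. }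
  assert (Hlam2 : 0 < lam ^ 2) by lra.
  apply Rmult_le_reg_r with (lam ^ 2); [exact Hlam2 |].
  apply Rmult_le_reg_l with (/ D); [apply Rinv_0_lt_compat; exact HD |].
  replace (/ D * (C / lam ^ 2 * lam ^ 2)) with (C / D) by (field; lra).
  replace (/ D * (D * lam ^ 2)) with (lam ^ 2) by (field; lra).
  exact Hsq.
Qed.

Lemma fobj_le_twice_on_window (C eps : R) (g : R -> R) (U lam : R) :
  0 < C -> 0 < eps -> 0 < U -> 1 <= g U -> g lam <= g U ->
  sqrt (C / (C / U ^ 2 + (g U - 1) / eps ^ 2)) <= lam ->
  fobj C eps g lam <= 2 * fobj C eps g U.
Proof.
  intros HC Heps HU HgU Hglam HL.
  unfold fobj.
  assert (Heps2 : 0 < eps ^ 2) by (apply pow_lt; exact Heps).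
  assert (HCU : 0 < C / U ^ 2) by (apply Rdiv_lt_0_compat; [exact HC | apply pow_lt; exact HU]).
  assert (Hpen : 0 <= (g U - 1) / eps ^ 2) by (apply Rle_mult_inv_pos; lra).
  assert (Hbarrier : C / lam ^ 2 <= C / U ^ 2 + (g U - 1) / eps ^ 2)
    by (apply div_sqr_le_of_sqrt_div_le; lra).
  assert (Hpenalty : g lam / eps ^ 2 <= g U / eps ^ 2)
    by (apply Rmult_le_compat_r; [left; apply Rinv_0_lt_compat |]; lra).
  assert (Hshift : (g U - 1) / eps ^ 2 <= g U / eps ^ 2)
    by (apply Rmult_le_compat_r; [left; apply Rinv_0_lt_compat |]; lra).
  lra.
Qed.

Lemma scaled_barrier_le_scaled_fobj (C eps : R) (g : R -> R) (k lam : R) :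
  1 <= k -> 0 <= g lam / eps ^ 2 ->
  k * C / lam ^ 2 + g lam / eps ^ 2 <= k * fobj C eps g lam.
Proof.
  intros Hk Hpen.
  unfold fobj, Rdiv.
  rewrite Rmult_assoc, Rmult_plus_distr_l.
  apply Rplus_le_compat_l.
  rewrite <- (Rmult_1_l (g lam * / eps ^ 2)) at 1.
  apply Rmult_le_compat_r; [exact Hpen | exact Hk].
Qed.

Theorem lemmaB6 (eps K C : R) (g : R -> R) (lamstar U : R)
  (heps : 0 < eps < 1) (hK : 1 <= K) (hC : K < C)
  (hg_range : forall x, 0 <= x <= 1 -> 1 <= g x <= K)
  (hg_mono : forall x y, 0 <= x -> x <= y -> y <= 1 -> g x <= g y)
  (hlam : 0 < lamstar <= 1)
  (hmin : forall lam, 0 < lam <= 1 -> fobj C eps g lamstar <= fobj C eps g lam)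
  (hU : 0 < U <= 1)
  (hfU : fobj C eps g U <= 25 * C / lamstar ^ 2 + g lamstar / eps ^ 2) :
  let L := sqrt (C / (C / U ^ 2 + (g U - 1) / eps ^ 2)) in
  forall lam, L <= lam <= U -> fobj C eps g lam <= 50 * fobj C eps g lamstar.
Proof.
  intros L lam [HL HlamU].
  assert (HC : 0 < C) by lra.
  assert (Hlam0 : 0 <= lam) by (apply Rle_trans with L; [apply sqrt_pos | exact HL]).
  assert (HgU := hg_range U ltac:(lra)).
  assert (Hgstar := hg_range lamstar ltac:(lra)).
  assert (Hglam : g lam <= g U) by (apply hg_mono; lra).
  assert (Hwindow : fobj C eps g lam <= 2 * fobj C eps g U)
    by (apply fobj_le_twice_on_window; [lra .. | exact HL]).
  assert (Hstar : 25 * C / lamstar ^ 2 + g lamstar / eps ^ 2 <= 25 * fobj C eps g lamstar).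
  { apply scaled_barrier_le_scaled_fobj; [lra |].
    apply Rle_mult_inv_pos; [lra | apply pow_lt; lra]. }
  lra.
Qed.
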